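(* Let $n\ge1$, $N=\{1,\dots,n\}$, $A=(a_{ij})\in[0,1]^{n\times n}$, $b=(b_1,\dots,b_n)$ with $b_i>0$, assume $\check\alpha_j\le1$ for all $j\in N$, and let $\lambda\in[0,+\infty)$. Let $p=(p_1,\dots,p_n)\in P$ and let $x\in[0,1]^n$ satisfy $$\begin{cases} x_j=d_{0j}=1 & \text{for all } j\in N^*,\\ d_{(p_j-1)j}\le x_j\le d_{p_jj} & \text{for all } j\in N\setminus N^*,\\ \sum_{j\in N^*}a_{ij}+\sum_{j\in N\setminus N^*}\big[\gamma_{ij}\,x_j+(1-\gamma_{ij})\,a_{ij}\big]\ge b_i & \text{for all } i\in N,\\ \sum_{j\in N^*}a_{ij}+\sum_{j\in N\setminus N^*}\big[\gamma_{ij}\,x_j+(1-\gamma_{ij})\,a_{ij}\big]=\lambda x_i & \text{for all } i\in N.\end{cases}$$ Then $x\in V^*(A,\lambda)$.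
   Context: $\theta=(0,\dots,0)$. For $x\in[0,1]^n$, $(A\odot x^T)_i=\sum_{j\in N}\min\{a_{ij},x_j\}$. $V^*(A,\lambda)=\{x\in[0,1]^n: (A\odot x^T)_i\ge b_i \text{ and } (A\odot x^T)_i=\lambda x_i \text{ for all } i\in N,\ x\neq\theta\}$. $\check\alpha_j=\max\big(\{0\}\cup\{b_i-\sum_{k\in N\setminus\{j\}}a_{ik}: i\in N\}\big)$. $D_j=\{d_{0j}<\dots<d_{l_jj}\}$ is the set $\{\check\alpha_j\}\cup\{a_{ij}: i\in N,\ a_{ij}\ge\check\alpha_j\}\cup\{1\}$ listed increasingly. $N^*=\{j\in N:\check\alpha_j=1\}$; $P_j=\{0\}$ for $j\in N^*$ and $P_j=\{1,\dots,l_j\}$ (indices with $d_{pj}>\check\alpha_j$) for $j\in N\setminus N^*$; $P=P_1\times\dots\times P_n$. For $p\in P$, $i\in N$, $j\in N\setminus N^*$: $\gamma_{ij}=1$ if $d_{p_jj}\le a_{ij}$ and $\gamma_{ij}=0$ if $a_{ij}\le d_{(p_j-1)j}$. *)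

(* Indices N = {1..n} are rendered as 'I_n (0-based). *)
From mathcomp Require Import all_boot all_order all_algebra.
Set Implicit Arguments. Unset Strict Implicit. Unset Printing Implicit Defensive.
Import Order.TTheory GRing.Theory Num.Theory.
Local Open Scope ring_scope.

Section Defs.
Variables (R : realFieldType) (n : nat).

Definition odot (A : 'M[R]_n) (x : 'I_n -> R) (i : 'I_n) : R :=
  \sum_(j < n) Num.min (A i j) (x j).

Definition Vstar (A : 'M[R]_n) (b : 'I_n -> R) (lam : R) (x : 'I_n -> R) : Prop :=
  (forall j, 0 <= x j <= 1) /\
  (forall i, b i <= odot A x i) /\
  (forall i, odot A x i = lam * x i) /\
  (exists j, x j != 0).

Definition alpha_check (A : 'M[R]_n) (b : 'I_n -> R) (j : 'I_n) : R :=
  \big[Num.max/0]_(i < n) (b i - \sum_(k < n | k != j) A i k).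

(* D_j = {alpha_j} ∪ {a_ij : a_ij >= alpha_j} ∪ {1}, listed increasingly
   (as a duplicate-free sorted sequence d_0j < ... < d_{l_j j}). *)
Definition Dseq (A : 'M[R]_n) (b : 'I_n -> R) (j : 'I_n) : seq R :=
  sort <=%R (undup (alpha_check A b j
     :: [seq A i j | i <- enum 'I_n & alpha_check A b j <= A i j] ++ [:: 1])).

Definition dval (A : 'M[R]_n) (b : 'I_n -> R) (p : nat) (j : 'I_n) : R :=
  nth 0 (Dseq A b j) p.

Definition lidx (A : 'M[R]_n) (b : 'I_n -> R) (j : 'I_n) : nat :=
  (size (Dseq A b j)).-1.

Definition inNstar (A : 'M[R]_n) (b : 'I_n -> R) (j : 'I_n) : bool :=
  alpha_check A b j == 1.

Definition inP (A : 'M[R]_n) (b : 'I_n -> R) (p : 'I_n -> nat) : Prop :=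
  forall j, if inNstar A b j then p j = 0%N
            else (1 <= p j <= lidx A b j)%N.

(* gamma_ij = 1 if d_{p_j j} <= a_ij, and 0 if a_ij <= d_{(p_j-1) j}
   (exactly one of these holds, since consecutive elements of D_j are
   strictly increasing and every a_ij >= alpha_j belongs to D_j). *)
Definition gamma (A : 'M[R]_n) (b : 'I_n -> R) (p : 'I_n -> nat) (i j : 'I_n) : R :=
  if dval A b (p j) j <= A i j then 1 else 0.

End Defs.

(* For j outside N*, the value x_j lies between two consecutive points of D_j,
   and every a_ij >= alpha_j is itself a point of D_j (smaller ones lie below all
   of D_j), so a_ij is never strictly between d_(p_j - 1)j and d_(p_j)j.  Hence min(a_ij, x_j) is x_j when gamma_ij = 1
   and a_ij when gamma_ij = 0; for j in N* it is a_ij since x_j = 1.  The linear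
   system of the hypothesis is therefore exactly (A ⊙ x^T)_i >= b_i and
   (A ⊙ x^T)_i = lambda x_i, and x <> 0 because lambda x_i >= b_i > 0. *)
From mathcomp Require Import all_boot all_order all_algebra.
From mathcomp Require Import zify.
Set Implicit Arguments. Unset Strict Implicit. Unset Printing Implicit Defensive.
Import Order.TTheory GRing.Theory Num.Theory.
Local Open Scope ring_scope.

Section SortedGap.
Local Open Scope order_scope.
Variables (d : Order.disp_t) (T : orderType d) (x0 : T).

Lemma sorted_le_nth_of_lt_nthS (s : seq T) (y : T) (q : nat) :
  sorted <=%O s -> y \in s -> (q.+1 < size s)%N ->
  y < nth x0 s q.+1 -> y <= nth x0 s q.
Proof.
move=> s_sorted y_in_s q_lt y_lt.
have le_nth := sorted_leq_nth le_trans lexx x0 s_sorted.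
have k_lt : (index y s < size s)%N by rewrite index_mem.
rewrite -(nth_index x0 y_in_s) in y_lt *.
have [k_le_q | q_lt_k] := leqP (index y s) q.
  by apply: le_nth => //; apply: ltnW.
by move: y_lt; rewrite ltNge le_nth.
Qed.

End SortedGap.

Section DSet.
Variables (R : realFieldType) (n : nat) (A : 'M[R]_n) (b : 'I_n -> R).
Hypothesis alpha_check_le1 : forall j, alpha_check A b j <= 1.

Lemma Dseq_sorted j : sorted <=%R (Dseq A b j).
Proof. by apply: sort_sorted; exact: le_total. Qed.

Lemma mem_Dseq j y :
  (y \in Dseq A b j) = (y \in alpha_check A b j
     :: [seq A i j | i <- enum 'I_n & alpha_check A b j <= A i j] ++ [:: 1]).
Proof. by rewrite mem_sort mem_undup. Qed.

Lemma alpha_check_le_Dseq j y : y \in Dseq A b j -> alpha_check A b j <= y.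
Proof.
rewrite mem_Dseq inE mem_cat inE => /orP[/eqP-> // | /orP[| /eqP->]] //.
by case/mapP=> k; rewrite mem_filter => /andP[alpha_le _] ->.
Qed.

Lemma entry_in_Dseq i j : alpha_check A b j <= A i j -> A i j \in Dseq A b j.
Proof.
move=> alpha_le; rewrite mem_Dseq inE mem_cat.
by rewrite (map_f (fun k => A k j)) ?orbT // mem_filter alpha_le mem_enum.
Qed.

Lemma entry_le_dval_of_lt_dvalS i j q : (q.+1 < size (Dseq A b j))%N ->
  A i j < dval A b q.+1 j -> A i j <= dval A b q j.
Proof.
move=> q_lt a_lt.
have [alpha_le | a_lt_alpha] := lerP (alpha_check A b j) (A i j).
  exact: sorted_le_nth_of_lt_nthS (Dseq_sorted j) (entry_in_Dseq alpha_le) q_lt a_lt.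
apply/ltW/(lt_le_trans a_lt_alpha)/alpha_check_le_Dseq/mem_nth.
exact: ltnW.
Qed.

Lemma min_entry_gamma (p : 'I_n -> nat) (x : 'I_n -> R) i j :
  (1 <= p j <= lidx A b j)%N ->
  dval A b (p j).-1 j <= x j <= dval A b (p j) j ->
  Num.min (A i j) (x j) = gamma A b p i j * x j + (1 - gamma A b p i j) * A i j.
Proof.
move=> /andP[p_ge1 p_le] /andP[lo_le_x x_le_hi]; rewrite /gamma.
case: ifPn => [hi_le_a | ].
  by rewrite mul1r subrr mul0r addr0 min_r // (le_trans x_le_hi).
rewrite mul0r subr0 mul1r add0r -ltNge -(prednK p_ge1) => a_lt.
apply/min_l/(le_trans _ lo_le_x)/entry_le_dval_of_lt_dvalS => //.
by move: p_le p_ge1; rewrite /lidx; lia.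
Qed.

End DSet.

Theorem theorem4p3 (R : realFieldType) (n : nat) (A : 'M[R]_n) (b : 'I_n -> R)
    (lam : R) (p : 'I_n -> nat) (x : 'I_n -> R) :
  (0 < n)%N ->
  (forall i j, 0 <= A i j <= 1) ->
  (forall i, 0 < b i) ->
  (forall j, alpha_check A b j <= 1) ->
  0 <= lam ->
  inP A b p ->
  (forall j, 0 <= x j <= 1) ->
  (forall j, inNstar A b j -> x j = dval A b 0 j /\ x j = 1) ->
  (forall j, ~~ inNstar A b j ->
     dval A b (p j).-1 j <= x j <= dval A b (p j) j) ->
  (forall i,
     b i <= \sum_(j < n | inNstar A b j) A i j
            + \sum_(j < n | ~~ inNstar A b j)
                (gamma A b p i j * x j + (1 - gamma A b p i j) * A i j)) ->
  (forall i,
     \sum_(j < n | inNstar A b j) A i j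
       + \sum_(j < n | ~~ inNstar A b j)
           (gamma A b p i j * x j + (1 - gamma A b p i j) * A i j)
     = lam * x i) ->
  Vstar A b lam x.
Proof.
move=> n_gt0 A01 b_gt0 alpha_le1 _ p_in_P x01 x_star x_nstar b_le sys_eq.
have odotE i : odot A x i = \sum_(j < n | inNstar A b j) A i j
    + \sum_(j < n | ~~ inNstar A b j)
        (gamma A b p i j * x j + (1 - gamma A b p i j) * A i j).
  rewrite /odot (bigID (inNstar A b)) /=; congr (_ + _); apply: eq_bigr => j j_star.
    by have [_ ->] := x_star j j_star; rewrite min_l //; case/andP: (A01 i j).
  apply: min_entry_gamma => //; last exact: x_nstar.
  by have := p_in_P j; rewrite (negbTE j_star).
split=> //; split=> [i|]; first by rewrite odotE.
split=> [i|]; first by rewrite odotE.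
pose i0 := Ordinal n_gt0; exists i0; apply: contraTneq (b_gt0 i0) => x_i0.
by rewrite -leNgt (le_trans (b_le i0)) // sys_eq x_i0 mulr0.
Qed.
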